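(* Let $X$ be a nontrivial real Banach space. The following assertions are equivalent: (i) $X^*$ has the weak$^*$ diameter $2$ property; (ii) $X$ is weakly octahedral; (iii) for every finite-dimensional subspace $E$ of $X$, every $x^*\in B_{X^*}$, every $\varepsilon>0$, and every $\varepsilon_0\in(0,\varepsilon)$, there is a $y\in S_X$ such that, whenever $|\gamma|\leq 1+\varepsilon_0$, there is a $y^*\in X^*$ satisfying $y^*|_E=x^*|_E$, $y^*(y)=\gamma$, and $\|y^*\|\leq 1+\varepsilon$; (iii') for every finite-dimensional subspace $E$ of $X$, every $x^*\in B_{X^*}$, and every $\varepsilon>0$, there are $y\in S_X$ and $x_1^*,x_2^*\in X^*$ satisfying $x_1^*|_E=x_2^*|_E=x^*|_E$, $x_1^*(y)-x_2^*(y)>2-\varepsilon$, and $\|x_1^*\|,\|x_2^*\|\leq 1+\varepsilon$.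
   Context: $B_Z$, $S_Z$ denote the closed unit ball and unit sphere of a Banach space $Z$. $X^*$ has the weak$^*$ diameter $2$ property if every nonempty relatively weak$^*$ open subset of $B_{X^*}$ has diameter $2$. $X$ is weakly octahedral if for every finite-dimensional subspace $E$ of $X$, every $x^*\in B_{X^*}$, and every $\varepsilon>0$, there is a $y\in S_X$ such that $\|x+y\|\geq(1-\varepsilon)(|x^*(x)|+\|y\|)$ for all $x\in E$. *)

From HB Require Import structures.
From mathcomp Require Import all_boot all_order all_algebra.
From mathcomp Require Import all_classical all_reals all_analysis.
Set Implicit Arguments. Unset Strict Implicit. Unset Printing Implicit Defensive.
Import Order.TTheory GRing.Theory Num.Theory.
Import numFieldNormedType.Exports.
Local Open Scope classical_set_scope.
Local Open Scope ring_scope.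

Section Banach.
Variables (R : realType) (X : normedModType R).

Definition is_dual (f : X -> R) : Prop :=
  (forall (a : R) (x y : X), f (a *: x + y) = a * f x + f y) /\ continuous f.

Definition dnorm (f : X -> R) : R :=
  sup [set `|f x| | x in [set x : X | `|x| <= 1]].

Definition dual_ball : set (X -> R) := [set f | is_dual f /\ dnorm f <= 1].

Definition weakstar_open (U : set (X -> R)) : Prop :=
  U `<=` is_dual /\
  forall f, U f -> exists (xs : seq X) (e : R), 0 < e /\
    [set g | is_dual g /\ forall x, x \in xs -> `|g x - f x| < e] `<=` U.

Definition ddiam (V : set (X -> R)) : R :=
  sup [set dnorm (f \- g) | f in V & g in V].

Definition weakstar_diam2 : Prop :=
  forall U, weakstar_open U -> (U `&` dual_ball) !=set0 ->
    ddiam (U `&` dual_ball) = 2.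

Definition span (xs : seq X) : set X :=
  [set x | exists c : nat -> R, x = \sum_(i < size xs) c i *: xs`_i].

Definition fin_dim_subspace (E : set X) : Prop := exists xs : seq X, E = span xs.

Definition weakly_octahedral : Prop :=
  forall E, fin_dim_subspace E -> forall xs, dual_ball xs ->
  forall eps : R, 0 < eps -> exists y : X, `|y| = 1 /\
    forall x, E x -> `|x + y| >= (1 - eps) * (`|xs x| + `|y|).

Definition cond_iii : Prop :=
  forall E, fin_dim_subspace E -> forall xs, dual_ball xs ->
  forall eps : R, 0 < eps -> forall eps0 : R, 0 < eps0 -> eps0 < eps ->
  exists y : X, `|y| = 1 /\
    forall gamma : R, `|gamma| <= 1 + eps0 ->
      exists ys : X -> R, is_dual ys /\ (forall x, E x -> ys x = xs x) /\
        ys y = gamma /\ dnorm ys <= 1 + eps.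

Definition cond_iii' : Prop :=
  forall E, fin_dim_subspace E -> forall xs, dual_ball xs ->
  forall eps : R, 0 < eps ->
  exists (y : X) (x1 x2 : X -> R), `|y| = 1 /\
    is_dual x1 /\ is_dual x2 /\
    (forall x, E x -> x1 x = xs x) /\ (forall x, E x -> x2 x = xs x) /\
    x1 y - x2 y > 2 - eps /\ dnorm x1 <= 1 + eps /\ dnorm x2 <= 1 + eps.

End Banach.

From Pilot Require Import Defs.
From HB Require Import structures.
From mathcomp Require Import all_boot all_order all_algebra.
From mathcomp Require Import all_classical all_reals all_analysis.
From mathcomp Require Import ring lra.
Set Implicit Arguments. Unset Strict Implicit. Unset Printing Implicit Defensive.
Import Order.TTheory GRing.Theory Num.Theory.
Import numFieldNormedType.Exports.
Local Open Scope classical_set_scope.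
Local Open Scope ring_scope.

(* Everything rests on Hahn-Banach (Zorn's lemma on dominated linear graphs)
   and on its consequence that a finite-dimensional subspace
   E = span xs has a bounded projection x = sum_i f_i(x) e_i with continuous
   coordinate functionals f_i.
   (i) -> (ii): the f_i turn "x^* nearly agrees with g on E" into a weak^*
   neighbourhood of x^*, in which diameter 2 yields g1, g2 and a unit y with
   g1 y - g2 y close to 2. Then g1 or -g2 nearly norms x + y, so
   |x + y| >= |x^* x| + 1 - small for bounded x in E; large x are trivial.
   (ii) -> (iii): weak octahedrality says exactly that x + t y |-> x^*(x) + gamma t
   is dominated by (1 + eps) |.| on E + R y; extend it by Hahn-Banach.
   (iii) -> (iii'): take gamma = 1 and gamma = -1.
   (iii') -> (i): dividing x1^*, x2^* by 1 + eps puts them in the unit ball and,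
   for small eps, in any prescribed weak^* neighbourhood of x^*, while keeping
   their distance close to 2. *)

Section LinearFunctionals.
Variables (R : realType) (X : normedModType R).

Definition is_linear (f : X -> R) : Prop :=
  forall (a : R) (x y : X), f (a *: x + y) = a * f x + f y.

Variable f : X -> R.
Hypothesis f_lin : is_linear f.

Lemma is_linear0 : f 0 = 0.
Proof.
have := f_lin 1 0 0; rewrite scaler0 addr0 mul1r => e.
by apply: (addrI (f 0)); rewrite addr0 -e.
Qed.

Lemma is_linearD x y : f (x + y) = f x + f y.
Proof. by rewrite -[x]scale1r f_lin mul1r scale1r. Qed.

Lemma is_linearZ a x : f (a *: x) = a * f x.
Proof. by rewrite -[a *: x]addr0 f_lin is_linear0 addr0. Qed.

Lemma is_linearN x : f (- x) = - f x.
Proof. by rewrite -scaleN1r is_linearZ mulN1r. Qed.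

Lemma is_linearB x y : f (x - y) = f x - f y.
Proof. by rewrite is_linearD is_linearN. Qed.

Lemma is_linear_sum n (F : nat -> X) : f (\sum_(i < n) F i) = \sum_(i < n) f (F i).
Proof.
elim: n => [|n IH]; first by rewrite !big_ord0 is_linear0.
by rewrite !big_ord_recr /= is_linearD IH.
Qed.

Lemma bounded_linear_continuous c : (forall x, `|f x| <= c * `|x|) -> continuous f.
Proof.
move=> hb x; apply/cvgrPdist_lt => e e0.
have c1 : 0 < `|c| + 1 by rewrite ltr_wpDl.
near=> z; rewrite -is_linearB.
apply: (le_lt_trans (hb _)).
apply: (le_lt_trans (y := (`|c| + 1) * `|x - z|)).
  by apply: ler_wpM2r => //; rewrite (le_trans (ler_norm _)) // lerDl.
rewrite -ltr_pdivlMl //.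
near: z; apply: cvgr_dist_lt => //; rewrite mulrC divr_gt0 //.
Unshelve. all: by end_near.
Qed.

End LinearFunctionals.

Section DualNorm.
Variables (R : realType) (X : normedModType R).
Implicit Types (f g : X -> R) (x y : X).

Lemma is_dual_linear f : is_dual f -> is_linear f.
Proof. by case. Qed.

Lemma is_dual_bounded f : is_dual f -> exists c, 0 < c /\ forall x, `|f x| <= c * `|x|.
Proof.
move=> [hl hc].
have := hc 0 => /cvgrPdist_lt/(_ 1 ltr01) /nbhs_ballP [d /= d0 H].
exists (2 / d); split; first by rewrite divr_gt0.
move=> x; have [->|x0] := eqVneq x 0; first by rewrite is_linear0 // !normr0 mulr0.
have nx : 0 < `|x| by rewrite normr_gt0.
have k0 : 0 <= d / (2 * `|x|) by rewrite divr_ge0 // ?mulr_ge0 // ltW.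
have zb : ball 0 d ((d / (2 * `|x|)) *: x).
  rewrite -ball_normE /ball_ /= sub0r normrN normrZ ger0_norm //.
  have -> : d / (2 * `|x|) * `|x| = d / 2 by field; rewrite gt_eqF.
  lra.
have := H _ zb; rewrite is_linear0 // sub0r normrN is_linearZ // normrM ger0_norm //.
rewrite mulrAC ltr_pdivrMr ?mulr_gt0 // mul1r => hlt.
have -> : 2 / d * `|x| = (2 * `|x|) / d by field; rewrite gt_eqF.
by rewrite ler_pdivlMr // mulrC ltW.
Qed.

Lemma is_dual_of_bound f c : is_linear f -> (forall x, `|f x| <= c * `|x|) -> is_dual f.
Proof. by move=> hl hb; split => //; exact: bounded_linear_continuous hb. Qed.

Lemma dnorm_set_has_ubound f : is_dual f ->
  has_ubound [set `|f x| | x in [set x : X | `|x| <= 1]].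
Proof.
move=> /is_dual_bounded [c [c0 hc]]; exists c => _ [x /= x1 <-].
by apply: (le_trans (hc x)); rewrite ler_piMr // ltW.
Qed.

Lemma normf_le_dnorm f x : is_dual f -> `|x| <= 1 -> `|f x| <= dnorm f.
Proof. by move=> hd x1; apply: ub_le_sup; [exact: dnorm_set_has_ubound|exists x]. Qed.

Lemma dnorm_ge0 f : is_dual f -> 0 <= dnorm f.
Proof. by move=> hd; apply: le_trans (normf_le_dnorm (x := 0) hd _); rewrite ?normr0. Qed.

Lemma normf_le_dnormM f x : is_dual f -> `|f x| <= dnorm f * `|x|.
Proof.
move=> hd; have hl := is_dual_linear hd.
have [->|x0] := eqVneq x 0; first by rewrite is_linear0 ?normr0 ?mulr0.
have nx : 0 < `|x| by rewrite normr_gt0.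
have := normf_le_dnorm (x := `|x|^-1 *: x) hd.
rewrite normrZ normfV normr_id mulVf ?gt_eqF // => /(_ (lexx _)).
rewrite is_linearZ // normrM normfV normr_id => h.
have -> : `|f x| = (`|x|^-1 * `|f x|) * `|x| by field; rewrite gt_eqF.
exact: ler_wpM2r.
Qed.

Lemma dnorm_le_bound f c : 0 <= c -> (forall x, `|f x| <= c * `|x|) -> dnorm f <= c.
Proof.
move=> c0 hb; apply: ge_sup; first by exists `|f 0|, 0 => //=; rewrite normr0.
by move=> _ [x /= x1 <-]; apply: (le_trans (hb x)); rewrite ler_piMr.
Qed.

Lemma dual_ball_le f x : dual_ball f -> `|f x| <= `|x|.
Proof.
move=> [hd nf]; apply: le_trans (normf_le_dnormM x hd) _.
by rewrite ler_piMl.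
Qed.

Lemma dnorm_gt_unit f r : is_dual f -> 0 <= r -> r < dnorm f ->
  exists y, `|y| = 1 /\ r < f y.
Proof.
move=> hd r0 /sup_gt [|_ [v /= v1 <-] hv].
  by exists `|f 0|, 0 => //=; rewrite normr0.
have hl := is_dual_linear hd.
have [w [w1 hw]] : exists w, `|w| <= 1 /\ r < f w.
  have [hs|hs] := lerP 0 (f v); first by exists v; rewrite -(ger0_norm hs).
  by exists (- v); rewrite normrN is_linearN // -(ltr0_norm hs).
have w0 : w != 0 by apply: contraTneq hw => ->; rewrite is_linear0 // -leNgt.
have nw : 0 < `|w| by rewrite normr_gt0.
exists (`|w|^-1 *: w); split; first by rewrite normrZ normfV normr_id mulVf ?gt_eqF.
rewrite is_linearZ //; apply: (lt_le_trans hw).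
by rewrite ler_peMl ?invf_ge1 //; lra.
Qed.

Lemma is_dual_scale f a : is_dual f -> is_dual (fun x => a * f x).
Proof.
move=> hf; have lf := is_dual_linear hf.
apply: (@is_dual_of_bound _ (`|a| * dnorm f)).
  by move=> b x y /=; rewrite is_linearD // is_linearZ //; ring.
by move=> x /=; rewrite normrM -mulrA ler_wpM2l //; exact: normf_le_dnormM.
Qed.

Lemma is_dual_sub f g : is_dual f -> is_dual g -> is_dual (f \- g).
Proof.
move=> hf hg; have lf := is_dual_linear hf; have lg := is_dual_linear hg.
apply: (@is_dual_of_bound _ (dnorm f + dnorm g)).
  by move=> a x y /=; rewrite !(is_linearD lf, is_linearD lg, is_linearZ lf, is_linearZ lg); ring.
move=> x /=; apply: le_trans (ler_normB _ _) _; rewrite mulrDl.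
by apply: lerD; exact: normf_le_dnormM.
Qed.

Lemma dnorm_sub_le2 f g : dual_ball f -> dual_ball g -> dnorm (f \- g) <= 2.
Proof.
move=> bf bg; apply: dnorm_le_bound => // x /=.
apply: le_trans (ler_normB _ _) _.
by have := dual_ball_le x bf; have := dual_ball_le x bg; lra.
Qed.

End DualNorm.

Section HahnBanach.
Variables (R : realType) (X : normedModType R) (c : R).
Hypothesis c_ge0 : 0 <= c.

Definition dominated_graph (G : set (X * R)) : Prop :=
  [/\ G (0, 0),
   (forall a x s y u, G (x, s) -> G (y, u) -> G (a *: x + y, a * s + u)) &
   (forall x s, G (x, s) -> s <= c * `|x|)].

Lemma dominated_graph_fun G x s t : dominated_graph G -> G (x, s) -> G (x, t) -> s = t.
Proof.
case=> _ hl hd hs ht.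
have h1 := hd _ _ (hl (-1) _ _ _ _ ht hs).
have h2 := hd _ _ (hl (-1) _ _ _ _ hs ht).
by move: h1 h2; rewrite scaleN1r addNr normr0 mulr0; lra.
Qed.

Lemma mulr_norm_scale (r : R) (x w : X) : 0 < r -> r * `|r^-1 *: x + w| = `|x + r *: w|.
Proof.
move=> r0; rewrite -{1}(gtr0_norm r0) -normrZ scalerDr scalerA mulfV ?gt_eqF //.
by rewrite scale1r.
Qed.

Definition graph_extension G z (al : R) : set (X * R) :=
  [set q | exists x s t, G (x, s) /\ q = (x + t *: z, s + t * al)].

Lemma dominated_graph_extension G z al : dominated_graph G ->
  (forall y u, G (y, u) -> u - c * `|y - z| <= al) ->
  (forall x s, G (x, s) -> al <= c * `|x + z| - s) ->
  dominated_graph (graph_extension G z al).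
Proof.
move=> [g0 hl hd] alL alU; split.
- by exists 0, 0, 0; rewrite scale0r mul0r !addr0.
- move=> a _ _ _ _ [x1 [s1 [t1 [h1 [-> ->]]]]] [x2 [s2 [t2 [h2 [-> ->]]]]].
  exists (a *: x1 + x2), (a * s1 + s2), (a * t1 + t2); split; first exact: hl.
  congr (_, _); last by ring.
  by rewrite scalerDr !scalerA scalerDl addrACA.
- move=> _ _ [x [s [t [h [-> ->]]]]].
  have [t0|t0|->] := ltgtP t 0; last by rewrite scale0r mul0r !addr0; exact: hd.
  + have r0 : 0 < - t by rewrite oppr_gt0.
    have := alL _ _ (hl (- t)^-1 _ _ _ _ h g0); rewrite !addr0 => h1.
    have := ler_wpM2l (ltW r0) h1; rewrite mulrBr mulrA mulfV ?gt_eqF // mul1r.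
    by rewrite mulrCA mulr_norm_scale // scaleNr scalerN opprK; lra.
  + have := alU _ _ (hl t^-1 _ _ _ _ h g0); rewrite !addr0 => h1.
    have := ler_wpM2l (ltW t0) h1.
    rewrite mulrBr (mulrA t t^-1) mulfV ?gt_eqF // mul1r.
    by rewrite mulrCA mulr_norm_scale //; lra.
Qed.

(* Any value between sup (u - c |y - z|) and inf (c |x + z| - s) over the graph
   is admissible at [z]; the triangle inequality makes this interval nonempty. *)
Lemma dominated_graph_extend G z : dominated_graph G -> (forall s, ~ G (z, s)) ->
  exists B, dominated_graph B /\ G `<` B.
Proof.
move=> gG nz; have [g0 hl hd] := gG.
pose L := [set p.2 - c * `|p.1 - z| | p in G].
have Lne : L !=set0 by exists ((0 : X, 0 : R).2 - c * `|(0 : X) - z|), (0, 0).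
have Lub x s : G (x, s) -> ubound L (c * `|x + z| - s).
  move=> hxs _ [[y u] /= hyu <-].
  have := hd _ _ (hl 1 _ _ _ _ hxs hyu); rewrite scale1r mul1r => h.
  have : `|x + y| <= `|x + z| + `|y - z|.
    by apply: le_trans (ler_normD _ _); rewrite addrACA subrr addr0.
  by move=> /(ler_wpM2l c_ge0); rewrite mulrDr; lra.
exists (graph_extension G z (sup L)); split.
  apply: dominated_graph_extension => // [y u h|x s h]; last first.
    by apply: ge_sup => //; exact: Lub.
  apply: ub_le_sup; last by exists (y, u).
  by exists (c * `|0 + z| - 0); apply: Lub.
split; first by move=> [x s] h; exists x, s, 0; rewrite scale0r mul0r !addr0.
move=> BG; apply: (nz (sup L)); apply: BG.
by exists 0, 0, 1; split => //; rewrite scale1r mul1r !add0r.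
Qed.

Lemma hahn_banach G0 : dominated_graph G0 ->
  exists f : X -> R, [/\ is_linear f, forall x s, G0 (x, s) -> f x = s &
                         forall x, f x <= c * `|x|].
Proof.
move=> g0.
pose P G := G = set0 \/ (dominated_graph G /\ G0 `<=` G).
have [A [PA Amax]] : exists A, P A /\ forall B, A `<` B -> ~ P B.
  apply: Zorn_bigcup => F FP Ftot.
  have [allz|] := pselect (forall G, F G -> G = set0).
    by left; apply/seteqP; split => [p [G FG]|//]; rewrite (allz G FG).
  move=> /(iffRL (existsNP _)) [G1 /not_implyP [FG1 G1n]].
  have gG1 : dominated_graph G1 /\ G0 `<=` G1 by case: (FP _ FG1).
  have domF G p : F G -> G p -> dominated_graph G.
    by move=> FG Gp; case: (FP _ FG) => [Gz|[]//]; move: Gp; rewrite Gz.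
  right; split; last by move=> p hp; exists G1 => //; apply: gG1.2.
  split.
  - by exists G1 => //; case: gG1.1.
  - move=> a x s y u [H1 FH1 h1] [H2 FH2 h2].
    have [H12|H21] := Ftot _ _ FH1 FH2.
    + exists H2 => //; case: (domF _ _ FH2 h2) => _ hl _.
      by apply: hl => //; exact: H12.
    + exists H1 => //; case: (domF _ _ FH1 h1) => _ hl _.
      by apply: hl => //; exact: H21.
  - by move=> x s [H FH h]; case: (domF _ _ FH h) => _ _ hd; exact: hd.
have [Az|[gA A0]] := PA.
  exfalso; apply: (Amax G0); last by right; split.
  by rewrite Az; split => [p []|h]; case: g0 => g00 _ _; exact: (h _ g00).
have tot z : exists s, A (z, s).
  apply: contrapT => /(iffRL (forallNP _)) nz.
  have [B [gB AB]] := dominated_graph_extend gA nz.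
  apply: (Amax B AB); right; split => //; apply: subset_trans A0 _; exact: AB.1.
pose f z := proj1_sig (cid (tot z)).
have fA z : A (z, f z) by exact: (proj2_sig (cid (tot z))).
have [_ hl hd] := gA.
exists f; split.
- by move=> a x y; apply: (dominated_graph_fun gA (fA _)); apply: hl.
- by move=> x s h; apply: (dominated_graph_fun gA (fA _)); exact: A0.
- by move=> x; exact: hd.
Qed.

Lemma hahn_banach_dual G0 : dominated_graph G0 ->
  exists f : X -> R, [/\ is_dual f, forall x s, G0 (x, s) -> f x = s & dnorm f <= c].
Proof.
move=> g0; have [f [hl hx hb]] := hahn_banach g0.
have hb' x : `|f x| <= c * `|x|.
  by rewrite ler_norml hb andbT lerNl -is_linearN // -(normrN x).
exists f; split => //; first exact: is_dual_of_bound hb'.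
exact: dnorm_le_bound.
Qed.

End HahnBanach.

Section Span.
Variables (R : realType) (X : normedModType R).
Implicit Types (zs : seq X) (x y w z : X).

Lemma span_nil x : Defs.span [::] x <-> x = 0.
Proof.
by split => [[c ->]|->]; [rewrite big_ord0|exists (fun=> 0); rewrite big_ord0].
Qed.

Lemma span_cons z zs x :
  Defs.span (z :: zs) x <-> exists a w, Defs.span zs w /\ x = a *: z + w.
Proof.
split => [[c ->]|[a [w [[c ->] ->]]]].
  exists (c 0%N), (\sum_(i < size zs) c i.+1 *: zs`_i).
  by split; [exists (fun i => c i.+1)|rewrite big_ord_recl].
by exists (fun i => if i is j.+1 then c j else a); rewrite /= big_ord_recl.
Qed.

Lemma span_subspace zs : Defs.span zs 0 /\
  forall a x y, Defs.span zs x -> Defs.span zs y -> Defs.span zs (a *: x + y).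
Proof.
elim: zs => [|z zs [IH0 IH]].
  split; first exact/span_nil.
  by move=> a x y /span_nil -> /span_nil ->; apply/span_nil; rewrite scaler0 addr0.
split; first by apply/span_cons; exists 0, 0; rewrite scale0r addr0.
move=> a x y /span_cons [a1 [w1 [h1 ->]]] /span_cons [a2 [w2 [h2 ->]]].
apply/span_cons; exists (a * a1 + a2), (a *: w1 + w2); split; first exact: IH.
by rewrite scalerDr scalerA scalerDl addrACA.
Qed.

Lemma span0 zs : Defs.span zs 0.
Proof. by case: (span_subspace zs). Qed.

Lemma spanZD zs a x y : Defs.span zs x -> Defs.span zs y -> Defs.span zs (a *: x + y).
Proof. by case: (span_subspace zs) => _; apply. Qed.

Lemma spanZ zs a x : Defs.span zs x -> Defs.span zs (a *: x).
Proof. by move=> h; rewrite -[_ *: _]addr0; apply: spanZD => //; exact: span0. Qed.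

Lemma spanD zs x y : Defs.span zs x -> Defs.span zs y -> Defs.span zs (x + y).
Proof. by move=> h1 h2; rewrite -[x]scale1r; apply: spanZD. Qed.

Lemma spanN zs x : Defs.span zs x -> Defs.span zs (- x).
Proof. by move=> h; rewrite -scaleN1r; exact: spanZ. Qed.

Lemma span_mem zs x : x \in zs -> Defs.span zs x.
Proof.
elim: zs => [//|z zs IH]; rewrite inE => /orP[/eqP ->|h]; apply/span_cons.
  by exists 1, 0; split; [exact: span0|rewrite scale1r addr0].
by exists 0, x; split; [exact: IH|rewrite scale0r add0r].
Qed.

End Span.

Section Expansion.
Variables (R : realType) (X : normedModType R).
Variables (n : nat) (e : nat -> X) (f : nat -> X -> R).
Hypothesis f_dual : forall i, is_dual (f i).

Definition expansion (v : X) : X := \sum_(i < n) f i v *: e i.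

Lemma expansion_span (zs : seq X) v :
  (forall i, (i < n)%N -> Defs.span zs (e i)) -> Defs.span zs (expansion v).
Proof.
move=> he; rewrite /expansion; elim/big_ind: _ => [|? ? ? ?|i _].
- exact: span0.
- exact: spanD.
- by apply: spanZ; exact: he.
Qed.

Lemma expansionB x y : expansion (x - y) = expansion x - expansion y.
Proof.
rewrite /expansion -sumrB; apply: eq_bigr => i _.
by rewrite (is_linearB (is_dual_linear (f_dual i))) scalerBl.
Qed.

Lemma norm_expansion_le v :
  `|expansion v| <= (\sum_(i < n) dnorm (f i) * `|e i|) * `|v|.
Proof.
rewrite /expansion mulr_suml; apply: le_trans (ler_norm_sum _ _ _) _.
apply: ler_sum => i _; rewrite normrZ mulrAC ler_wpM2r //.
exact: normf_le_dnormM.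
Qed.

(* [expansion] is a bounded projection onto [S], so a nonzero vector in its
   kernel stays away from [S]. *)
Lemma expansion_dist_gt0 (S : set X) z :
  (forall w, S w -> w = expansion w) -> expansion z = 0 -> z != 0 ->
  exists2 d, 0 < d & forall w, S w -> d <= `|z - w|.
Proof.
move=> hS hz z0.
pose C := \sum_(i < n) dnorm (f i) * `|e i|.
have C0 : 0 <= C by apply: sumr_ge0 => i _; rewrite mulr_ge0 ?dnorm_ge0.
have C1 : 0 < 1 + C by lra.
exists (`|z| / (1 + C)); first by rewrite divr_gt0 ?normr_gt0.
move=> w hw; rewrite ler_pdivrMr //.
have ew : expansion (z - w) = - w by rewrite expansionB -(hS _ hw) hz sub0r.
have := norm_expansion_le (z - w); rewrite ew normrN -/C => hwC.
have : `|z| <= `|z - w| + `|w| by apply: le_trans (ler_normD _ _); rewrite subrK.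
by nra.
Qed.

Lemma expansion_approx (g h : X -> R) del x : is_dual g -> is_dual h ->
  (forall i, (i < n)%N -> `|g (e i) - h (e i)| <= del) -> x = expansion x ->
  `|g x - h x| <= del * (\sum_(i < n) dnorm (f i)) * `|x|.
Proof.
move=> hg hh hd ex; have hl := is_dual_linear (is_dual_sub hg hh).
have -> : g x - h x = (g \- h) x by [].
rewrite {1}ex /expansion (is_linear_sum hl n (fun j => f j x *: e j)) -mulrA.
rewrite mulr_suml mulr_sumr.
apply: le_trans (ler_norm_sum _ _ _) _; apply: ler_sum => i _.
rewrite (is_linearZ hl) normrM mulrC ler_pM ?hd //.
exact: normf_le_dnormM.
Qed.

End Expansion.

Section FiniteDimensional.
Variables (R : realType) (X : normedModType R).
Implicit Types (zs : seq X) (x w z : X).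

Lemma dual_coordinate zs z d : 0 < d -> (forall w, Defs.span zs w -> d <= `|z - w|) ->
  exists g : X -> R, is_dual g /\ forall w t, Defs.span zs w -> g (w + t *: z) = t.
Proof.
move=> d0 hd.
pose G0 := [set q : X * R | exists w t, Defs.span zs w /\ q = (w + t *: z, t)].
have gG0 : dominated_graph d^-1 G0.
  split.
  - by exists 0, 0; split; [exact: span0|rewrite scale0r addr0].
  - move=> a _ _ _ _ [w1 [t1 [h1 [-> ->]]]] [w2 [t2 [h2 [-> ->]]]].
    exists (a *: w1 + w2), (a * t1 + t2); split; first exact: spanZD.
    by congr (_, _); rewrite scalerDr !scalerA scalerDl addrACA.
  - move=> _ _ [w [t [hw [-> ->]]]].
    have [->|t0] := eqVneq t 0; first by rewrite mulr_ge0 // invr_ge0 ltW.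
    have nt : 0 < `|t| by rewrite normr_gt0.
    have := hd _ (spanN (spanZ t^-1 hw)); rewrite opprK => h1.
    have -> : `|w + t *: z| = `|t| * `|z + t^-1 *: w|.
      by rewrite -normrZ scalerDr scalerA mulfV // scale1r addrC.
    rewrite ler_pdivlMl // (mulrC d); apply: le_trans (ler_wpM2l (ltW nt) h1).
    by rewrite ler_pM2r // ler_norm.
have di : 0 <= d^-1 by rewrite invr_ge0 ltW.
have [g [hg hgx _]] := hahn_banach_dual di gG0.
by exists g; split => // w t hw; apply: hgx; exists w, t.
Qed.

Lemma span_expansion zs : exists n (e : nat -> X) (f : nat -> X -> R),
  [/\ forall i, is_dual (f i), forall i, (i < n)%N -> Defs.span zs (e i) &
      forall x, Defs.span zs x -> x = expansion n e f x].
Proof.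
elim: zs => [|z zs [n [e [f [hf he hx]]]]].
  exists 0%N, (fun=> 0), (fun _ _ => 0); split => //.
  - move=> i; apply: (@is_dual_of_bound _ _ _ 0) => [a x y|x].
      by rewrite mulr0 addr0.
    by rewrite normr0 mul0r.
  - by move=> x /span_nil ->; rewrite /expansion big_ord0.
pose P := expansion n e f.
have PE v : Defs.span zs (P v) by exact: expansion_span.
have zsE w : Defs.span zs w -> Defs.span (z :: zs) w.
  by move=> hw; apply/span_cons; exists 0, w; rewrite scale0r add0r.
pose z' := z - P z.
have Pz' : P z' = 0 by rewrite /z' /P expansionB // -(hx _ (PE z)) subrr.
have [z0|z0] := eqVneq z' 0.
  have zE : Defs.span zs z by move/eqP: z0; rewrite subr_eq0 => /eqP ->.
  exists n, e, f; split => // [i /he /zsE //|x /span_cons [a [w [hw ->]]]].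
  by apply: hx; apply: spanZD.
have [d d0 hd] := expansion_dist_gt0 hf hx Pz' z0.
have [g [hg gE]] := dual_coordinate d0 hd.
(* Adjoin [z'] with coordinate [g]; the old coordinates must vanish on [z']. *)
pose e' i := if (i < n)%N then e i else z'.
pose f' i := if (i < n)%N then f i \- (fun x => f i z' * g x) else g.
exists n.+1, e', f'; split.
- by move=> i; rewrite /f'; case: ifP => _ //; apply: is_dual_sub => //; exact: is_dual_scale.
- move=> i _; rewrite /e'; case: ifP => hi; first by apply/zsE/he.
  by apply/span_cons; exists 1, (- P z); split; [exact/spanN|rewrite scale1r].
- move=> x /span_cons [a [w [hw ->]]].
  have ex : a *: z + w = (a *: P z + w) + a *: z'.
    by rewrite /z' scalerBr [RHS]addrCA [X in _ = _ + X]addrAC subrr add0r.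
  have vE : Defs.span zs (a *: P z + w) by apply: spanZD.
  have gx : g (a *: z + w) = a by rewrite ex gE.
  rewrite /expansion big_ord_recr /= /e' /f' ltnn.
  under eq_bigr => i _ do rewrite ltn_ord.
  rewrite gx {1}ex; congr (_ + _).
  rewrite (hx _ vE) /expansion; apply: eq_bigr => i _; congr (_ *: _).
  have hl := is_dual_linear (hf i).
  by rewrite /= ex gE // (is_linearD hl (a *: P z + w)) (is_linearZ hl a z'); ring.
Qed.

End FiniteDimensional.

Lemma sup_eq_approx (R : realType) (S : set R) a : S !=set0 -> ubound S a ->
  (forall d, 0 < d -> exists2 s, S s & a - d < s) -> sup S = a.
Proof.
move=> Sn Sub Sd; apply/eqP; rewrite eq_le ge_sup //=.
rewrite leNgt; apply/negP => hlt.
have [s Ss hs] := Sd (a - sup S) ltac:(rewrite subr_gt0 //).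
have : s <= sup S by apply: ub_le_sup => //; exists a.
lra.
Qed.

Section Implications.
Variables (R : realType) (X : normedModType R).

Lemma cond_iii_iii' : cond_iii X -> cond_iii' X.
Proof.
move=> h E hE xs hxs eps e0.
have [y [ny H]] := h E hE xs hxs eps e0 (eps / 2) ltac:(lra) ltac:(lra).
have [x1 [d1 [E1 [y1 n1]]]] := H 1 ltac:(rewrite normr1; lra).
have [x2 [d2 [E2 [y2 n2]]]] := H (-1) ltac:(rewrite normrN normr1; lra).
by exists y, x1, x2; do 6!split => //; rewrite y1 y2; lra.
Qed.

Lemma norm_le_sum_norms (xs : seq X) x : x \in xs -> `|x| <= \sum_(y <- xs) `|y|.
Proof.
elim: xs => [//|z zs IH]; rewrite inE big_cons => /orP[/eqP ->|h].
  by rewrite lerDl sumr_ge0.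
by apply: le_trans (IH h) _; rewrite lerDr.
Qed.

Lemma shrunk_dual_near (f xi : X -> R) (xs : seq X) eta :
  dual_ball f -> is_dual xi -> 0 < eta -> dnorm xi <= 1 + eta ->
  (forall x, Defs.span xs x -> xi x = f x) ->
  dual_ball (fun x => (1 + eta)^-1 * xi x) /\
  forall x, x \in xs -> `|(1 + eta)^-1 * xi x - f x| <= eta * `|x|.
Proof.
move=> Bf dxi eta0 nxi Exi; set k := (1 + eta)^-1.
have k0 : 0 < k by rewrite invr_gt0; lra.
have kk : k * (1 + eta) = 1 by rewrite mulVf //; apply/eqP; lra.
split.
  split; first exact: is_dual_scale.
  apply: dnorm_le_bound => // x.
  rewrite normrM gtr0_norm // -kk -mulrA ler_pM2l //.
  by apply: le_trans (normf_le_dnormM x dxi) _; rewrite ler_wpM2r.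
move=> x xin; rewrite (Exi _ (span_mem xin)).
have ek : eta * k = 1 - k by rewrite -kk; ring.
have -> : k * f x - f x = - (eta * k) * f x by rewrite ek; ring.
rewrite normrM normrN normrM (gtr0_norm eta0) (gtr0_norm k0) -mulrA ler_pM2l //.
apply: le_trans (dual_ball_le x Bf); rewrite ler_piMl //.
by have := mulr_gt0 eta0 k0; lra.
Qed.

Lemma cond_iii'_weakstar_diam2 : cond_iii' X -> weakstar_diam2 X.
Proof.
move=> h U [_ Uop] [f [Uf Bf]].
apply: sup_eq_approx.
- by exists (dnorm (f \- f)), f => //; exists f.
- by move=> _ [g [_ Bg] [g' [_ Bg'] <-]]; exact: dnorm_sub_le2.
move=> del del0.
have [xs [e [e0 hU]]] := Uop f Uf.
pose M := 1 + \sum_(y <- xs) `|y|.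
have M0 : 0 < M by rewrite /M ltr_wpDr ?sumr_ge0.
pose eta := Num.min (del / 3) (e / (2 * M)).
have eta0 : 0 < eta by rewrite lt_min !divr_gt0 // mulr_gt0.
have etad : eta <= del / 3 by rewrite ge_min lexx.
have etae : eta * M < e.
  rewrite -ltr_pdivlMr // (le_lt_trans (y := e / (2 * M))) ?ge_min ?lexx ?orbT //.
  by rewrite invfM mulrA ltr_pM2r ?invr_gt0 //; lra.
have [y [x1 [x2 [ny [d1 [d2 [E1 [E2 [hy [n1 n2]]]]]]]]]] :=
  h (Defs.span xs) (ex_intro _ xs erefl) f Bf eta eta0.
pose k := (1 + eta)^-1.
have shrink xi : is_dual xi -> dnorm xi <= 1 + eta ->
    (forall x, Defs.span xs x -> xi x = f x) -> (U `&` dual_ball (X := X)) (fun x => k * xi x).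
  move=> dxi nxi Exi; have [Bk hk] := shrunk_dual_near Bf dxi eta0 nxi Exi.
  split => //; apply: hU; split => [|x xin]; first by case: Bk.
  apply: le_lt_trans (hk _ xin) _; apply: le_lt_trans etae.
  by rewrite ler_pM2l // /M (le_trans (norm_le_sum_norms xin)) // lerDr.
pose g1 x := k * x1 x; pose g2 x := k * x2 x.
exists (dnorm (g1 \- g2)); first by exists g1; [exact: shrink|exists g2; [exact: shrink|]].
have dg := is_dual_sub (is_dual_scale k d1) (is_dual_scale k d2).
have h1 : `|(g1 \- g2) y| <= dnorm (g1 \- g2) by apply: normf_le_dnorm dg _; rewrite ny.
have h3 : k * (x1 y - x2 y) <= `|(g1 \- g2) y| by rewrite /= /g1 /g2 -mulrBr ler_norm.
have k0 : 0 < k by rewrite invr_gt0; lra.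
have kk : k * (1 + eta) = 1 by rewrite mulVf //; apply/eqP; lra.
(* k (2 - eta) >= 2 - 3 eta because k (1 + eta) = 1 *)
by nra.
Qed.

Lemma octahedral_homogeneous (E : set X) (xs : X -> R) y ep :
  (forall a x, E x -> E (a *: x)) -> dual_ball xs -> 0 <= ep -> `|y| = 1 ->
  (forall x, E x -> (1 - ep) * (`|xs x| + `|y|) <= `|x + y|) ->
  forall w t, E w -> (1 - ep) * (`|xs w| + `|t|) <= `|w + t *: y|.
Proof.
move=> EZ hxs ep0 ny H w t hw; have lx := is_dual_linear hxs.1.
have [->|t0] := eqVneq t 0.
  rewrite normr0 addr0 scale0r addr0; apply: le_trans (dual_ball_le w hxs).
  by have := normr_ge0 (xs w); nra.
have nt : 0 < `|t| by rewrite normr_gt0.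
have := H _ (EZ t^-1 _ hw); rewrite ny (is_linearZ lx) normrM normfV => H1.
have -> : `|w + t *: y| = `|t| * `|t^-1 *: w + y|.
  by rewrite -normrZ scalerDr scalerA mulfV // scale1r addrC.
apply: le_trans (ler_wpM2l (ltW nt) H1).
suff -> : `|t| * ((1 - ep) * (`|t|^-1 * `|xs w| + 1)) = (1 - ep) * (`|xs w| + `|t|) by [].
by field; rewrite gt_eqF.
Qed.

Lemma weakly_octahedral_cond_iii : weakly_octahedral X -> cond_iii X.
Proof.
move=> h E [zs ->] xs hxs eps e0 eps0 p0 pe.
pose ep := (eps - eps0) / (1 + eps).
have ep0 : 0 < ep by rewrite divr_gt0; lra.
have epe : (1 + eps) * (1 - ep) = 1 + eps0 by rewrite /ep; field; apply/eqP; lra.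
have [y [ny H]] := h _ (ex_intro _ zs erefl) xs hxs ep ep0.
have key := octahedral_homogeneous (fun a x => @spanZ _ _ zs a x) hxs (ltW ep0) ny H.
have lx := is_dual_linear hxs.1.
exists y; split => // gam hgam.
pose G0 := [set q : X * R | exists w t,
  Defs.span zs w /\ q = (w + t *: y, xs w + gam * t)].
have gG0 : dominated_graph (1 + eps) G0.
  split.
  - exists 0, 0; split; first exact: span0.
    by rewrite scale0r addr0 (is_linear0 lx) mulr0 addr0.
  - move=> a _ _ _ _ [w1 [t1 [h1 [-> ->]]]] [w2 [t2 [h2 [-> ->]]]].
    exists (a *: w1 + w2), (a * t1 + t2); split; first exact: spanZD.
    congr (_, _); first by rewrite scalerDr !scalerA scalerDl addrACA.
    by rewrite (is_linearD lx) (is_linearZ lx); ring.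
  - move=> _ _ [w [t [hw [-> ->]]]].
    have pe1 : 0 <= 1 + eps by lra.
    have := ler_wpM2l pe1 (key w t hw); rewrite mulrA epe; apply: le_trans.
    have g1 : gam * t <= (1 + eps0) * `|t|.
      by apply: le_trans (ler_norm _) _; rewrite normrM ler_wpM2r.
    by have := ler_norm (xs w); have := normr_ge0 (xs w); nra.
have [ys [hys hyx hyn]] : exists ys : X -> R,
    [/\ is_dual ys, forall x s, G0 (x, s) -> ys x = s & dnorm ys <= 1 + eps].
  by apply: hahn_banach_dual gG0; lra.
exists ys; split => //; split; [|split] => //.
- move=> x hxE; apply: hyx; exists x, 0; split => //.
  by rewrite scale0r addr0 mulr0 addr0.
- apply: hyx; exists 0, 1; split; first exact: span0.
  by rewrite scale1r add0r (is_linear0 lx) mulr1 add0r.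
Qed.

End Implications.

Section DiameterTwo.
Variables (R : realType) (X : normedModType R).

Lemma seq_uniform_margin (s : seq X) (a : X -> R) d :
  (forall x, x \in s -> a x < d) -> exists2 r, 0 < r & forall x, x \in s -> a x + r <= d.
Proof.
elim: s => [|z s IH] h; first by exists 1.
have [r r0 hr] : exists2 r, 0 < r & forall x, x \in s -> a x + r <= d.
  by apply: IH => x hx; apply: h; rewrite inE hx orbT.
have hz := h z (mem_head _ _).
exists (Num.min r (d - a z)); first by rewrite lt_min r0 subr_gt0.
move=> x; rewrite inE => /orP[/eqP ->|hx].
  by rewrite -lerBrDl ge_min lexx orbT.
by apply: le_trans (hr _ hx); rewrite lerD2l ge_min lexx.
Qed.

Lemma weakstar_open_nbhd (f : X -> R) (xs : seq X) del :
  weakstar_open [set g | is_dual g /\ forall x, x \in xs -> `|g x - f x| < del].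
Proof.
split; first by move=> g [].
move=> g [hg hgx].
have [r r0 hr] := seq_uniform_margin hgx.
exists xs, r; split => // k [hk hkx]; split => // x xin.
have := hr _ xin; have := hkx _ xin.
have : `|k x - f x| <= `|k x - g x| + `|g x - f x|.
  by apply: le_trans (ler_normD _ _); rewrite addrA subrK.
lra.
Qed.

Lemma weakstar_diam2_witness U del : weakstar_diam2 X -> weakstar_open U ->
  (U `&` dual_ball (X := X)) !=set0 -> 0 < del -> del <= 2 ->
  exists g1 g2 y, [/\ (U `&` dual_ball (X := X)) g1, (U `&` dual_ball (X := X)) g2,
                     `|y| = 1 & 2 - del < g1 y - g2 y].
Proof.
move=> h hU hUB del0 del2.
have [_ [g1 Ug1 [g2 Ug2 <-]] hgt] :
    exists2 s, [set dnorm (f \- g) | f in U `&` dual_ball (X := X) &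
                                    g in U `&` dual_ball (X := X)] s & 2 - del < s.
  apply: sup_gt; last by move: (h U hU hUB); rewrite /ddiam => ->; lra.
  by case: hUB => g hg; exists (dnorm (g \- g)), g => //; exists g.
have del2' : 0 <= 2 - del by lra.
have [y [ny hy]] := dnorm_gt_unit (is_dual_sub Ug1.2.1 Ug2.2.1) del2' hgt.
by exists g1, g2, y.
Qed.

(* Both [g1] and [-g2] nearly norm [y], so one of them nearly norms [x + y]. *)
Lemma octahedral_lower_bound (g1 g2 : X -> R) (a : R) x y del eta :
  dual_ball g1 -> dual_ball g2 -> `|y| = 1 -> 2 - del < g1 y - g2 y ->
  `|g1 x - a| <= eta -> `|g2 x - a| <= eta -> `|a| + 1 - del - eta <= `|x + y|.
Proof.
move=> b1 b2 ny hy; rewrite !ler_norml => /andP[a1l a1r] /andP[a2l a2r].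
have l1 := is_dual_linear b1.1; have l2 := is_dual_linear b2.1.
have g1y : g1 y <= 1 by rewrite -ny (le_trans (ler_norm _)) // dual_ball_le.
have g2y : - g2 y <= 1 by rewrite -ny (le_trans (ler_norm _)) // normrN dual_ball_le.
have F1 : g1 x + g1 y <= `|x + y|.
  by rewrite -(is_linearD l1) (le_trans (ler_norm _)) // dual_ball_le.
have F2 : - g2 x - g2 y <= `|x + y|.
  by rewrite -opprD -(is_linearD l2) (le_trans (ler_norm _)) // normrN dual_ball_le.
by have [a0|a0] := lerP 0 a; [rewrite ger0_norm|rewrite ltr0_norm]; lra.
Qed.

Lemma weakstar_diam2_weakly_octahedral :
  (exists x : X, x != 0) -> weakstar_diam2 X -> weakly_octahedral X.
Proof.
move=> [x0 nx0] h E [zs ->] xs hxs eps e0.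
have [e1|elt1] := lerP 1 eps.
  exists (`|x0|^-1 *: x0); split.
    by rewrite normrZ normfV normr_id mulVf // normr_eq0.
  move=> x _; apply: le_trans (normr_ge0 _).
  by rewrite mulr_le0_ge0 ?addr_ge0 //; lra.
have [n [e [f [hf _ hx]]]] := span_expansion zs.
pose K := \sum_(i < n) dnorm (f i).
have K0 : 0 <= K by apply: sumr_ge0 => i _; exact: dnorm_ge0.
pose R0 := 2 / eps.
have R00 : 0 < R0 by rewrite divr_gt0.
have KR0 : 0 < 1 + K * R0 by have := mulr_ge0 K0 (ltW R00); lra.
pose del := eps / (2 * (1 + K * R0)).
have del0 : 0 < del by rewrite divr_gt0 // mulr_gt0.
have delK : del * (1 + K * R0) = eps / 2 by rewrite /del; field; rewrite gt_eqF.
have del1 : del <= 2 by have := mulr_ge0 (ltW del0) (mulr_ge0 K0 (ltW R00)); lra.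
pose es := [seq e i | i <- iota 0 n].
have esin i : (i < n)%N -> e i \in es by move=> hi; rewrite map_f // mem_iota.
pose U := [set g | is_dual g /\ forall x, x \in es -> `|g x - xs x| < del].
have hUB : (U `&` dual_ball (X := X)) !=set0.
  by exists xs; split => //; split => [|x _]; [case: hxs|rewrite subrr normr0].
have [g1 [g2 [y [[[dg1 hg1] b1] [[dg2 hg2] b2] ny hy]]]] :=
  weakstar_diam2_witness h (weakstar_open_nbhd xs es del) hUB del0 del1.
exists y; split => // x hxE; rewrite ny.
have approx g : is_dual g -> (forall z, z \in es -> `|g z - xs z| < del) ->
    `|g x - xs x| <= del * K * `|x|.
  move=> dg hg; rewrite /K; apply: (expansion_approx hf dg hxs.1 _ (hx _ hxE)).
  by move=> i hi; exact: ltW (hg _ (esin _ hi)).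
have ax : `|xs x| <= `|x| by exact: dual_ball_le.
have [rR|rR] := lerP `|x| R0.
  have T : del * K * `|x| <= del * K * R0.
    by rewrite ler_wpM2l // mulr_ge0 // ltW.
  have := octahedral_lower_bound b1 b2 ny hy
    (le_trans (approx _ dg1 hg1) T) (le_trans (approx _ dg2 hg2) T).
  have := normr_ge0 (xs x); nra.
have F8 : `|x| - 1 <= `|x + y|.
  by have := ler_normB (x + y) y; rewrite addrK ny; lra.
have eR : eps * R0 = 2 by rewrite /R0 mulrCA mulfV ?gt_eqF ?mulr1.
have h2 : 2 < eps * `|x| by rewrite -eR ltr_pM2l.
have := normr_ge0 (xs x); nra.
Qed.

End DiameterTwo.

Theorem theorem3p3 (R : realType) (X : completeNormedModType R)
  (nontriv : exists x : X, x != 0) :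
  [<-> weakstar_diam2 X; weakly_octahedral X; cond_iii X; cond_iii' X].
Proof.
tfae.
- exact: weakstar_diam2_weakly_octahedral.
- exact: weakly_octahedral_cond_iii.
- exact: cond_iii_iii'.
- exact: cond_iii'_weakstar_diam2.
Qed.
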